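(* Consider the two-individual system under (h1), (h2), (h3), and suppose $M>0$. Then both individuals act infinitely (countably) many times after any fixed time $t_{start}\ge0$; that is, the system is in the full action state.
   Context: Two-individual model ($n=2$): parameters $\sigma_A,\sigma_S\ge 0$, $\sigma_C>0$, $\mu_S\in[0,1]$, $\mu_C>0$, $r>0$, $\tau\in(0,1)$, $\alpha_1,\alpha_2\in(-1,1)$. States $x_i\in(-1,1)$, $y_i\in[0,1]$, with $\gamma_1=y_2$, $\gamma_2=y_1$. Between action events: $\dot x_i=[\sigma_A\alpha_i+\sigma_S(\gamma_i-\mu_S)]\,\sigma_C(\gamma_i+\mu_C)(1-x_i)(1+x_i)$, $\dot y_i=-ry_i$. Individual $i$ ''acts'' at time $t$ when $x_i(t)$ reaches $\tau$; immediately afterwards $x_i$ is reset to $0$ and $y_i$ to $1$, and evolution resumes. Hypotheses: (h1) $\sigma_A\alpha_1-\sigma_S\mu_S>0$; (h2) $\sigma_A\alpha_2-\sigma_S\mu_S\le0$; (h3) $x_1(0)=y_1(0)=y_2(0)=0$ and $x_2(0)\in(-1,\tau)$. Constants: $A_1=(\sigma_A\alpha_1-\sigma_S\mu_S)\sigma_C\mu_C$, $T=\tanh^{-1}(\tau)/A_1$, $A=(\sigma_A\alpha_2-\sigma_S\mu_S)\sigma_C\mu_C$, $B=-\frac1r\big[(\sigma_A\alpha_2-\sigma_S\mu_S)\sigma_C+\sigma_S\sigma_C\mu_C\big]$, $C=-\frac{\sigma_S\sigma_C}{2r}$, $M=AT+Be^{-rT}+Ce^{-2rT}-B-C$. *)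

From Stdlib Require Import Reals List.
From Coquelicot Require Import Coquelicot.
Open Scope R_scope.

Definition atanh (x : R) : R := / 2 * ln ((1 + x) / (1 - x)).

Record params := Params {
  sA : R; sS : R; sC : R; muS : R; muC : R; rr : R; tau : R;
  al1 : R; al2 : R }.

Definition valid_params (p : params) : Prop :=
  0 <= sA p /\ 0 <= sS p /\ 0 < sC p /\ 0 <= muS p <= 1 /\ 0 < muC p /\
  0 < rr p /\ 0 < tau p < 1 /\ -1 < al1 p < 1 /\ -1 < al2 p < 1.

(** Right-hand side of the opinion equation for individual with bias
    [alpha], perceived signal [gamma] and state [x]. *)
Definition xrhs (p : params) (alpha gamma x : R) : R :=
  (sA p * alpha + sS p * (gamma - muS p)) * sC p * (gamma + muC p)
  * (1 - x) * (1 + x).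

Definition A1c (p : params) := (sA p * al1 p - sS p * muS p) * sC p * muC p.
Definition Tc (p : params) := atanh (tau p) / A1c p.
Definition Ac (p : params) := (sA p * al2 p - sS p * muS p) * sC p * muC p.
Definition Bc (p : params) :=
  - / rr p * ((sA p * al2 p - sS p * muS p) * sC p + sS p * sC p * muC p).
Definition Cc (p : params) := - (sS p * sC p) / (2 * rr p).
Definition Mc (p : params) :=
  Ac p * Tc p + Bc p * exp (- rr p * Tc p) + Cc p * exp (- 2 * rr p * Tc p)
  - Bc p - Cc p.

Definition finite_set (E : R -> Prop) : Prop :=
  exists l : list R, forall t, E t -> In t l.

(** Solution of the hybrid two-individual system on [0, +oo).
    [x1 x2 y1 y2] are the (right-continuous) state trajectories; [E1], [E2]
    are the sets of action times of individuals 1 and 2.  The value at an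
    action time is the post-reset value.  gamma_1 = y2, gamma_2 = y1. *)
Definition is_solution (p : params) (x1 x2 y1 y2 : R -> R)
    (E1 E2 : R -> Prop) : Prop :=
  (forall t, E1 t -> 0 < t) /\ (forall t, E2 t -> 0 < t) /\
  (forall T, finite_set (fun t => E1 t /\ t <= T)) /\
  (forall T, finite_set (fun t => E2 t /\ t <= T)) /\
  (forall t, 0 <= t -> -1 < x1 t < tau p /\ -1 < x2 t < tau p) /\
  (forall t, 0 <= t -> 0 <= y1 t <= 1 /\ 0 <= y2 t <= 1) /\
  (forall t, 0 < t -> ~ E1 t -> ~ E2 t ->
     is_derive x1 t (xrhs p (al1 p) (y2 t) (x1 t)) /\
     is_derive x2 t (xrhs p (al2 p) (y1 t) (x2 t)) /\
     is_derive y1 t (- rr p * y1 t) /\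
     is_derive y2 t (- rr p * y2 t)) /\
  (forall t, 0 < t -> ~ E1 t -> continuous x1 t /\ continuous y1 t) /\
  (forall t, 0 < t -> ~ E2 t -> continuous x2 t /\ continuous y2 t) /\
  (forall t, 0 <= t ->
     filterlim x1 (at_right t) (locally (x1 t)) /\
     filterlim x2 (at_right t) (locally (x2 t)) /\
     filterlim y1 (at_right t) (locally (y1 t)) /\
     filterlim y2 (at_right t) (locally (y2 t))) /\
  (forall t, E1 t ->
     filterlim x1 (at_left t) (locally (tau p)) /\ x1 t = 0 /\ y1 t = 1) /\
  (forall t, E2 t ->
     filterlim x2 (at_left t) (locally (tau p)) /\ x2 t = 0 /\ y2 t = 1).

From Stdlib Require Import Reals List Lra Classical.
From Coquelicot Require Import Coquelicot.
Open Scope R_scope.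

(* In the variable [atanh x_i] the opinion dynamics becomes [d/dt atanh x_i = xrate]:
   the rate of individual 1 is at least [A1c > 0] (as [y_2 >= 0]), so after acting at
   [q] (where [x_1 = 0]) it acts again within [Tc].  Suppose individual 2 never acts
   after some time.  Between two consecutive actions [q < t] of individual 1 we have
   [y_1 = exp (- r (u - q))], so [atanh x_2] increases by exactly [Mfun (t - q)].  The
   derivative of [Mfun] is a convex quadratic in [exp (- r L)], negative at [0] by (h2),
   hence once negative it stays negative and [Mfun] lies above its chord from [0] to
   [(Tc, Mc)] on [[0, Tc]].  With [Mc > 0], [atanh x_2] thus grows at least linearly
   along the actions of individual 1 and eventually exceeds [atanh tau]. *)

Lemma finite_set_incl (P Q : R -> Prop) :
  (forall t, Q t -> P t) -> finite_set P -> finite_set Q.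
Proof. intros HQP [l Hl]. exists l. auto. Qed.

Lemma finite_set_bounded (P : R -> Prop) :
  finite_set P -> exists m, forall t, P t -> t <= m.
Proof.
  intros [l Hl]. exists (fold_right Rmax 0 l). intros t Ht.
  specialize (Hl t Ht). clear Ht. revert Hl.
  induction l as [|a l IH]; simpl; [contradiction|].
  intros [<-|Hl]; [apply Rmax_l|].
  eapply Rle_trans; [apply IH, Hl|apply Rmax_r].
Qed.

Lemma finite_set_max (P : R -> Prop) :
  finite_set P -> (exists t, P t) -> exists m, P m /\ forall t, P t -> t <= m.
Proof.
  intros [l Hl]. revert P Hl.
  induction l as [|a l IH]; intros P Hl [t Ht]; [destruct (Hl t Ht)|].
  destruct (classic (exists t, P t /\ t <> a)) as [Hex|Hno].
  - destruct (IH (fun t => P t /\ t <> a)) as (q & [Hq _] & Hmax); [|exact Hex|].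
    { intros z [Hz Hza]. destruct (Hl z Hz); [congruence|assumption]. }
    destruct (classic (P a /\ q < a)) as [[Ha Hqa]|Hnot].
    + exists a. split; [exact Ha|]. intros z Hz.
      destruct (Req_dec z a) as [->|Hza]; [lra|].
      specialize (Hmax z (conj Hz Hza)). lra.
    + exists q. split; [exact Hq|]. intros z Hz.
      destruct (Req_dec z a) as [->|Hza]; [|exact (Hmax z (conj Hz Hza))].
      apply Rnot_lt_le. intros Hqa. apply Hnot. auto.
  - assert (Honly : forall z, P z -> z = a) by (intros z Hz; apply NNPP; eauto).
    exists t. split; [exact Ht|]. intros z Hz. rewrite (Honly z Hz), (Honly t Ht). lra.
Qed.

Lemma finite_set_min (P : R -> Prop) :
  finite_set P -> (exists t, P t) -> exists m, P m /\ forall t, P t -> m <= t.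
Proof.
  intros [l Hl] [t Ht].
  destruct (finite_set_max (fun z => P (- z))) as (m & Hm & Hmax).
  - exists (map Ropp l). intros z Hz. rewrite <- (Ropp_involutive z). apply in_map, Hl, Hz.
  - exists (- t). rewrite Ropp_involutive. exact Ht.
  - exists (- m). split; [exact Hm|]. intros z Hz.
    specialize (Hmax (- z)). rewrite Ropp_involutive in Hmax. specialize (Hmax Hz). lra.
Qed.

Lemma locally_finite_ind (S P : R -> Prop) (s0 : R) :
  (forall T, finite_set (fun t => S t /\ t <= T)) ->
  S s0 -> P s0 ->
  (forall q t, S q -> s0 <= q < t -> (forall z, S z -> ~ (q < z < t)) -> P q -> P t) ->
  forall t, S t -> s0 <= t -> P t.
Proof.
  intros Hfin HS0 HP0 Hstep t Ht Hst. apply NNPP. intros HnP.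
  (* a least counterexample t0, and the last point q of S before it *)
  destruct (finite_set_min (fun z => S z /\ s0 <= z <= t /\ ~ P z))
    as (t0 & (HSt0 & Ht0 & HnPt0) & Hmin).
  { apply (finite_set_incl (fun z => S z /\ z <= t)); [|apply Hfin].
    intros z (Hz & Hzt & _). split; [exact Hz|lra]. }
  { exists t. repeat split; [exact Ht|lra|lra|exact HnP]. }
  assert (Hs0t0 : s0 < t0).
  { destruct (Req_dec t0 s0) as [->|]; [contradiction|lra]. }
  destruct (finite_set_max (fun z => S z /\ s0 <= z < t0)) as (q & (HSq & Hq) & Hmax).
  { apply (finite_set_incl (fun z => S z /\ z <= t0)); [|apply Hfin].
    intros z (Hz & Hzt). split; [exact Hz|lra]. }
  { exists s0. repeat split; [exact HS0|lra|lra]. }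
  apply HnPt0, (Hstep q t0 HSq Hq).
  - intros z Hz Hqz. assert (z <= q) by (apply Hmax; split; [exact Hz|lra]). lra.
  - apply NNPP. intros HnPq.
    assert (t0 <= q) by (apply Hmin; repeat split; [exact HSq|lra|lra|exact HnPq]). lra.
Qed.

Lemma not_finite_of_unbounded (S : R -> Prop) (t0 : R) :
  (forall m, exists t, m < t /\ S t) -> ~ finite_set (fun t => S t /\ t0 < t).
Proof.
  intros Hunb Hfin. destruct (finite_set_bounded _ Hfin) as [m Hm].
  destruct (Hunb (Rmax m t0)) as (t & Ht & HSt).
  pose proof (Rmax_l m t0). pose proof (Rmax_r m t0).
  assert (t <= m) by (apply Hm; split; [exact HSt|lra]). lra.
Qed.

Lemma filterlim_Rminus {T} (F : (T -> Prop) -> Prop) {FF : Filter F} (f g : T -> R) a b :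
  filterlim f F (locally a) -> filterlim g F (locally b) ->
  filterlim (fun t => f t - g t) F (locally (a - b)).
Proof.
  intros Hf Hg. eapply (filterlim_comp_2 f (fun t => - g t) Rplus Hf).
  - exact (filterlim_comp _ _ _ g Ropp F (locally b) (locally (- b)) Hg (filterlim_opp b)).
  - exact (filterlim_plus a (- b)).
Qed.

Lemma filterlim_Rmult {T} (F : (T -> Prop) -> Prop) {FF : Filter F} (f g : T -> R) a b :
  filterlim f F (locally a) -> filterlim g F (locally b) ->
  filterlim (fun t => f t * g t) F (locally (a * b)).
Proof.
  intros Hf Hg. exact (filterlim_comp_2 f g Rmult Hf Hg (@filterlim_mult R_AbsRing a b)).
Qed.

Lemma filterlim_continuity_pt_comp {T} (F : (T -> Prop) -> Prop) (f : R -> R) (g : T -> R) x :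
  filterlim g F (locally x) -> continuity_pt f x ->
  filterlim (fun t => f (g t)) F (locally (f x)).
Proof.
  intros Hg Hf.
  exact (filterlim_comp _ _ _ g f F _ _ Hg (proj1 (continuity_pt_filterlim f x) Hf)).
Qed.

Lemma filterlim_at_right_continuity_pt (h : R -> R) a :
  continuity_pt h a -> filterlim h (at_right a) (locally (h a)).
Proof.
  intros Hh. eapply filterlim_filter_le_1; [apply filter_le_within|].
  apply continuity_pt_filterlim, Hh.
Qed.

Lemma continuity_pt_of_ex_derive (h : R -> R) x : ex_derive h x -> continuity_pt h x.
Proof. intros Hh. apply continuity_pt_filterlim. exact (ex_derive_continuous h x Hh). Qed.

Lemma Rle_of_derive_nonneg_closed (h df : R -> R) (l : list R) u v :
  u <= v ->
  (forall z, u <= z <= v -> continuity_pt h z) ->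
  (forall z, u < z < v -> ~ In z l -> is_derive h z (df z) /\ 0 <= df z) ->
  h u <= h v.
Proof.
  revert u v. induction l as [|w l IH]; intros u v Huv Hc Hd.
  - destruct (Req_dec u v) as [<-|Hne]; [lra|].
    assert (Hder : forall z, u < z < v -> derivable_pt h z).
    { intros z Hz. exists (df z). apply is_derive_Reals, (Hd z Hz), in_nil. }
    assert (Hid : forall z, u < z < v -> derivable_pt id z) by (intros; apply derivable_pt_id).
    destruct (MVT h id u v Hder Hid ltac:(lra) Hc) as (z & Hz & Heq).
    { intros z _. apply derivable_continuous_pt, derivable_pt_id. }
    destruct (Hd z Hz (in_nil (a := z))) as [Hdz Hdf].
    rewrite (derive_pt_eq_0 _ _ _ _ (derivable_pt_lim_id z)) in Heq.
    rewrite (derive_pt_eq_0 _ _ _ _ (proj1 (is_derive_Reals _ _ _) Hdz)) in Heq.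
    unfold id in Heq. nra.
  - assert (Hd' : forall a b, u <= a -> b <= v -> ~ (a < w < b) ->
                  forall z, a < z < b -> ~ In z l -> is_derive h z (df z) /\ 0 <= df z).
    { intros a b Ha Hb Hw z Hz Hzl. apply Hd; [lra|]. intros [<-|Hin]; [lra|contradiction]. }
    destruct (classic (u < w < v)) as [Hw|Hw].
    + apply Rle_trans with (h w).
      * apply IH; [lra|intros; apply Hc; lra|apply (Hd' u w); lra].
      * apply IH; [lra|intros; apply Hc; lra|apply (Hd' w v); lra].
    + apply IH; [lra|exact Hc|apply (Hd' u v); lra].
Qed.

Lemma Rle_of_derive_nonneg (h df : R -> R) (l : list R) a b :
  a <= b ->
  filterlim h (at_right a) (locally (h a)) ->
  (forall z, a < z <= b -> continuity_pt h z) ->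
  (forall z, a < z < b -> ~ In z l -> is_derive h z (df z) /\ 0 <= df z) ->
  h a <= h b.
Proof.
  intros Hab Hr Hc Hd. destruct (Req_dec a b) as [<-|Hne]; [lra|].
  apply (filterlim_le (F := at_right a) h (fun _ => h b) (h a) (h b));
    [|exact Hr|apply filterlim_const].
  assert (Hba : 0 < b - a) by lra.
  exists (mkposreal _ Hba). intros u Hu Hau.
  change (Rabs (u - a) < b - a) in Hu. apply Rabs_lt_between in Hu.
  apply (Rle_of_derive_nonneg_closed h df l); [lra|intros; apply Hc; lra|].
  intros z Hz. apply Hd. lra.
Qed.

Lemma eq_of_derive0 (h : R -> R) a b :
  a <= b ->
  filterlim h (at_right a) (locally (h a)) ->
  (forall z, a < z <= b -> continuity_pt h z) ->
  (forall z, a < z < b -> is_derive h z 0) ->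
  h b = h a.
Proof.
  intros Hab Hr Hc Hd. apply Rle_antisym.
  - assert (Hopp : - h a <= - h b).
    { apply (Rle_of_derive_nonneg (fun u => - h u) (fun _ => 0) nil a b Hab).
      - exact (filterlim_comp _ _ _ h Ropp _ _ _ Hr (filterlim_opp (h a))).
      - intros z Hz. apply continuity_pt_opp, Hc, Hz.
      - intros z Hz _. split; [|lra]. rewrite <- Ropp_0. apply (is_derive_opp h), Hd, Hz. }
    lra.
  - apply (Rle_of_derive_nonneg h (fun _ => 0) nil a b Hab Hr Hc).
    intros z Hz _. split; [apply Hd, Hz|lra].
Qed.

Lemma eq_exp_of_derive (f : R -> R) (k a b : R) :
  a <= b ->
  filterlim f (at_right a) (locally (f a)) ->
  (forall z, a < z <= b -> continuity_pt f z) ->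
  (forall z, a < z < b -> is_derive f z (k * f z)) ->
  f b = f a * exp (k * (b - a)).
Proof.
  intros Hab Hr Hc Hd.
  set (e := fun u => exp (- k * (u - a))).
  assert (He : forall z, is_derive e z (- k * e z)).
  { intros z. unfold e. auto_derive; [exact I|]. rewrite Rmult_1_r. reflexivity. }
  assert (Hconst : f b * e b = f a * e a).
  { apply (eq_of_derive0 (fun u => f u * e u) a b Hab).
    - apply (filterlim_Rmult (at_right a) f e); [exact Hr|].
      apply filterlim_at_right_continuity_pt, continuity_pt_of_ex_derive. eexists. apply He.
    - intros z Hz. apply continuity_pt_mult; [apply Hc, Hz|].
      apply continuity_pt_of_ex_derive. eexists. apply He.
    - intros z Hz. replace 0 with (k * f z * e z + f z * (- k * e z)) by ring.
      apply (is_derive_mult f e); [apply Hd, Hz|apply He|intros; apply Rmult_comm]. }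
  unfold e in Hconst. rewrite Rminus_diag, Rmult_0_r, exp_0, Rmult_1_r in Hconst.
  rewrite <- Hconst, Rmult_assoc, <- exp_plus.
  replace (- k * (b - a) + k * (b - a)) with 0 by ring. rewrite exp_0. ring.
Qed.

Lemma atanh_0 : atanh 0 = 0.
Proof. unfold atanh. rewrite Rminus_0_r, Rplus_0_r, Rdiv_1_l, Rinv_1, ln_1. ring. Qed.

Lemma atanh_lt x y : -1 < x -> x < y -> y < 1 -> atanh x < atanh y.
Proof.
  intros. unfold atanh. apply Rmult_lt_compat_l; [lra|].
  apply ln_increasing; [apply Rdiv_lt_0_compat; lra|].
  apply Rlt_0_minus.
  replace ((1 + y) / (1 - y) - (1 + x) / (1 - x)) with (2 * (y - x) / ((1 - x) * (1 - y)))
    by (field; lra).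
  apply Rdiv_lt_0_compat; [lra|]. apply Rmult_lt_0_compat; lra.
Qed.

Lemma is_derive_atanh x : -1 < x < 1 -> is_derive atanh x (/ ((1 - x) * (1 + x))).
Proof.
  intros Hx. unfold atanh. auto_derive.
  - repeat split; [lra|]. apply Rdiv_lt_0_compat; lra.
  - field. lra.
Qed.

Lemma continuity_pt_atanh x : -1 < x < 1 -> continuity_pt atanh x.
Proof. intros Hx. apply continuity_pt_of_ex_derive. eexists. apply is_derive_atanh, Hx. Qed.

Lemma is_derive_atanh_comp (f : R -> R) t k :
  -1 < f t < 1 -> is_derive f t (k * (1 - f t) * (1 + f t)) ->
  is_derive (fun u => atanh (f u)) t k.
Proof.
  intros Hft Hf.
  replace k with (k * (1 - f t) * (1 + f t) * / ((1 - f t) * (1 + f t))) by (field; lra).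
  exact (is_derive_comp atanh f t _ _ (is_derive_atanh _ Hft) Hf).
Qed.

Definition xrate (p : params) (alpha gamma : R) : R :=
  (sA p * alpha + sS p * (gamma - muS p)) * sC p * (gamma + muC p).

Lemma A1c_xrate p : A1c p = xrate p (al1 p) 0.
Proof. unfold A1c, xrate. ring. Qed.

Lemma xrate_ge_at0 p alpha gamma :
  valid_params p -> 0 <= sA p * alpha - sS p * muS p -> 0 <= gamma ->
  xrate p alpha 0 <= xrate p alpha gamma.
Proof.
  intros (_ & HsS & HsC & _ & HmuC & _) Ha Hg. unfold xrate.
  assert (0 <= sS p * gamma * sC p * (gamma + muC p)).
  { repeat apply Rmult_le_pos; lra. }
  assert (0 <= (sA p * alpha - sS p * muS p) * sC p * gamma).
  { repeat apply Rmult_le_pos; lra. }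
  nra.
Qed.

(* By convexity, a quadratic with [q 0 < 0] and [q e < 0] is negative on [[0, e]]:
   [e q e' - e' q e - (e - e') q 0 = c2 e e' (e' - e)]. *)
Lemma quadratic_neg_below c0 c1 c2 e e' :
  c0 < 0 -> 0 <= c2 -> 0 <= e' <= e ->
  c0 + c1 * e + c2 * e ^ 2 < 0 -> c0 + c1 * e' + c2 * e' ^ 2 < 0.
Proof.
  intros H0 H2 He Hq. destruct (Req_dec e' 0) as [->|He'0]; [lra|].
  assert (Hid : e * (c0 + c1 * e' + c2 * e' ^ 2)
                = e' * (c0 + c1 * e + c2 * e ^ 2) + (e - e') * c0 + c2 * e * e' * (e' - e))
    by ring.
  assert (0 <= c2 * e * e' * (e - e')) by (repeat apply Rmult_le_pos; lra).
  assert (e' * (c0 + c1 * e + c2 * e ^ 2) < 0) by nra.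
  assert ((e - e') * c0 <= 0) by nra.
  nra.
Qed.

Lemma xrate_lt_below p alpha c e e' :
  0 <= sS p -> 0 <= sC p -> (sA p * alpha - sS p * muS p) * sC p * muC p < c ->
  0 <= e' <= e -> xrate p alpha e < c -> xrate p alpha e' < c.
Proof.
  intros HsS HsC Hc He Hlt.
  set (c0 := (sA p * alpha - sS p * muS p) * sC p * muC p - c).
  set (c1 := (sA p * alpha - sS p * muS p) * sC p + sS p * sC p * muC p).
  assert (Hq : forall x, xrate p alpha x - c = c0 + c1 * x + sS p * sC p * x ^ 2)
    by (intros; unfold xrate, c0, c1; ring).
  enough (c0 + c1 * e' + sS p * sC p * e' ^ 2 < 0) by (rewrite <- Hq in *; lra).
  apply (quadratic_neg_below c0 c1 _ e e'); unfold c0 in *; try lra.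
  - apply Rmult_le_pos; lra.
  - rewrite <- Hq. lra.
Qed.

(* [Mfun p L] is the increase of [atanh x_2] during a time [L] after individual 1
   acts, when [y_1 = exp (- r L)] and individual 2 does not act; [Mc p = Mfun p (Tc p)]. *)
Definition Mfun (p : params) (L : R) : R :=
  Ac p * L + Bc p * exp (- rr p * L) + Cc p * exp (- 2 * rr p * L) - Bc p - Cc p.

Lemma Mfun_0 p : Mfun p 0 = 0.
Proof. unfold Mfun. rewrite !Rmult_0_r, exp_0. ring. Qed.

Lemma is_derive_Mfun p L :
  rr p <> 0 -> is_derive (Mfun p) L (xrate p (al2 p) (exp (- rr p * L))).
Proof.
  intros Hr. unfold Mfun. auto_derive; [repeat split|].
  replace (exp (- 2 * rr p * L)) with (exp (- rr p * L) ^ 2)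
    by (rewrite <- Rsqr_pow2; unfold Rsqr; rewrite <- exp_plus; f_equal; ring).
  unfold xrate, Ac, Bc, Cc. field. exact Hr.
Qed.

(* [G] increases and then decreases on [[a, b]]. *)
Lemma ge_min_of_derive_sign (G g : R -> R) a b L :
  a <= L <= b ->
  (forall x, is_derive G x (g x)) ->
  (forall x y, a <= x -> x < y -> y <= b -> g x < 0 -> g y < 0) ->
  Rmin (G a) (G b) <= G L.
Proof.
  intros HL HG Hsign.
  assert (Hc : forall x, continuity_pt G x)
    by (intros x; apply continuity_pt_of_ex_derive; eexists; apply HG).
  apply Rnot_lt_le. intros Hlt.
  assert (Ha : G L < G a) by (eapply Rlt_le_trans; [exact Hlt|apply Rmin_l]).
  assert (Hb : G L < G b) by (eapply Rlt_le_trans; [exact Hlt|apply Rmin_r]).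
  destruct (MVT_gen G a L g) as (x & Hx & Hx_eq); [intros; apply HG|intros; apply Hc|].
  destruct (MVT_gen G L b g) as (y & Hy & Hy_eq); [intros; apply HG|intros; apply Hc|].
  rewrite Rmin_left, Rmax_right in Hx, Hy by lra.
  assert (HaL : a < L) by (destruct (Req_dec a L) as [->|]; lra).
  assert (HLb : L < b) by (destruct (Req_dec L b) as [->|]; lra).
  assert (Hgx : g x < 0) by nra.
  assert (Hgy : 0 < g y) by nra.
  destruct (Req_dec x y) as [<-|Hxy]; [lra|].
  assert (g y < 0) by (apply (Hsign x y); lra). lra.
Qed.

Lemma Mfun_ge_chord p T L :
  valid_params p -> Ac p <= 0 -> 0 < T -> 0 < Mfun p T -> 0 <= L <= T ->
  Mfun p T / T * L <= Mfun p L.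
Proof.
  intros Hp HA HT HM HL. pose proof Hp as (_ & HsS & HsC & _ & _ & Hr & _).
  set (c := Mfun p T / T).
  assert (Hc : 0 < c) by (apply Rdiv_lt_0_compat; lra).
  enough (Rmin (Mfun p 0 - c * 0) (Mfun p T - c * T) <= Mfun p L - c * L) as Hmin.
  { rewrite Mfun_0, Rmin_left in Hmin; [lra|]. unfold c. right. field. lra. }
  apply (ge_min_of_derive_sign (fun x => Mfun p x - c * x)
           (fun x => xrate p (al2 p) (exp (- rr p * x)) - c) 0 T L HL).
  - intros x. apply (is_derive_minus (Mfun p)); [apply is_derive_Mfun; lra|].
    auto_derive; [exact I|ring].
  - intros x y Hx Hxy Hy Hgx. cbv beta in *.
    enough (xrate p (al2 p) (exp (- rr p * y)) < c) by lra.
    apply (xrate_lt_below p (al2 p) c (exp (- rr p * x))); try lra.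
    + fold (Ac p). lra.
    + split; [left; apply exp_pos|]. left. apply exp_increasing. nra.
Qed.

Section Solution.

Variables (p : params) (x1 x2 y1 y2 : R -> R) (E1 E2 : R -> Prop).
Hypothesis Hp : valid_params p.
Hypothesis Hsol : is_solution p x1 x2 y1 y2 E1 E2.
Hypothesis Hdrive1 : sA p * al1 p - sS p * muS p > 0.

Lemma x1_range t : 0 <= t -> -1 < x1 t < tau p.
Proof. intros Ht. destruct Hsol as (_ & _ & _ & _ & Hx & _). exact (proj1 (Hx t Ht)). Qed.

Lemma x2_range t : 0 <= t -> -1 < x2 t < tau p.
Proof. intros Ht. destruct Hsol as (_ & _ & _ & _ & Hx & _). exact (proj2 (Hx t Ht)). Qed.

Lemma below_tau_open x : -1 < x < tau p -> -1 < x < 1.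
Proof. destruct Hp as (_ & _ & _ & _ & _ & _ & Htau & _). lra. Qed.

Lemma atanh_lt_tau x : -1 < x < tau p -> atanh x < atanh (tau p).
Proof. destruct Hp as (_ & _ & _ & _ & _ & _ & Htau & _). intros. apply atanh_lt; lra. Qed.

Lemma A1c_pos : 0 < A1c p.
Proof.
  destruct Hp as (_ & _ & HsC & _ & HmuC & _).
  unfold A1c. repeat apply Rmult_lt_0_compat; lra.
Qed.

Lemma Tc_pos : 0 < Tc p.
Proof.
  destruct Hp as (_ & _ & _ & _ & _ & _ & Htau & _).
  apply Rdiv_lt_0_compat; [|exact A1c_pos].
  rewrite <- atanh_0. apply atanh_lt; lra.
Qed.

Lemma act1_within s :
  0 <= s -> exists t, s < t <= s + (atanh (tau p) - atanh (x1 s)) / A1c p /\ E1 t.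
Proof.
  intros Hs.
  destruct Hsol as (_ & _ & _ & HE2fin & _ & Hy & Hflow & Hc1 & _ & Hrc & _).
  pose proof A1c_pos as HA1.
  set (K := (atanh (tau p) - atanh (x1 s)) / A1c p).
  assert (HK : A1c p * K = atanh (tau p) - atanh (x1 s)) by (unfold K; field; lra).
  assert (atanh (x1 s) < atanh (tau p)) by (apply atanh_lt_tau, x1_range, Hs).
  assert (K_pos : 0 < K) by (apply Rdiv_lt_0_compat; lra).
  apply NNPP. intros Hno.
  assert (Hno1 : forall t, s < t <= s + K -> ~ E1 t) by eauto.
  destruct (HE2fin (s + K)) as [l Hl].
  assert (Hcont : forall z, s < z <= s + K -> continuity_pt (fun u => atanh (x1 u)) z).
  { intros z Hz. apply (continuity_pt_comp x1 atanh).
    - apply continuity_pt_filterlim, (Hc1 z); [lra|apply Hno1, Hz].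
    - apply continuity_pt_atanh, below_tau_open, x1_range; lra. }
  assert (Hgrow : atanh (x1 s) - A1c p * s <= atanh (x1 (s + K)) - A1c p * (s + K)).
  { apply (Rle_of_derive_nonneg (fun u => atanh (x1 u) - A1c p * u)
             (fun u => xrate p (al1 p) (y2 u) - A1c p) l); [lra| | |].
    - apply (filterlim_Rminus (at_right s)).
      + apply filterlim_continuity_pt_comp; [apply Hrc, Hs|].
        apply continuity_pt_atanh, below_tau_open, x1_range, Hs.
      + apply filterlim_at_right_continuity_pt, continuity_pt_of_ex_derive. auto_derive. exact I.
    - intros z Hz. apply continuity_pt_minus; [apply Hcont, Hz|].
      apply continuity_pt_of_ex_derive. auto_derive. exact I.
    - intros z Hz Hzl.
      assert (HnE2 : ~ E2 z) by (intros HE; apply Hzl, Hl; split; [exact HE|lra]).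
      destruct (Hflow z ltac:(lra) (Hno1 z ltac:(lra)) HnE2) as [Hdx1 _].
      split.
      + apply (is_derive_minus (fun u => atanh (x1 u))).
        * apply is_derive_atanh_comp; [apply below_tau_open, x1_range; lra|exact Hdx1].
        * auto_derive; [exact I|ring].
      + rewrite A1c_xrate. enough (xrate p (al1 p) 0 <= xrate p (al1 p) (y2 z)) by lra.
        apply xrate_ge_at0; [exact Hp|lra|apply Hy; lra]. }
  assert (atanh (x1 (s + K)) < atanh (tau p)) by (apply atanh_lt_tau, x1_range; lra).
  lra.
Qed.

Lemma next_act1 q : E1 q -> exists t, q < t <= q + Tc p /\ E1 t.
Proof.
  intros Hq. destruct Hsol as (HE1pos & _ & _ & _ & _ & _ & _ & _ & _ & _ & Hact1 & _).
  destruct (act1_within q) as (t & Ht & HEt); [left; apply HE1pos, Hq|].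
  rewrite (proj1 (proj2 (Hact1 q Hq))), atanh_0, Rminus_0_r in Ht.
  exists t. split; [exact Ht|exact HEt].
Qed.

Lemma E1_unbounded m : exists t, m < t /\ E1 t.
Proof.
  destruct (act1_within (Rmax m 0)) as (t & Ht & HEt); [apply Rmax_r|].
  exists t. split; [|exact HEt]. pose proof (Rmax_l m 0). lra.
Qed.

Lemma y1_after_act1 q t :
  E1 q -> (forall z, q < z < t -> ~ E1 z /\ ~ E2 z) ->
  forall u, q <= u < t -> y1 u = exp (- rr p * (u - q)).
Proof.
  intros Hq Hquiet u Hu.
  destruct Hsol as (HE1pos & _ & _ & _ & _ & _ & Hflow & Hc1 & _ & Hrc & Hact1 & _).
  pose proof (HE1pos q Hq) as Hq0.
  rewrite (eq_exp_of_derive y1 (- rr p) q u), (proj2 (proj2 (Hact1 q Hq))), Rmult_1_l;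
    [reflexivity|lra| | |].
  - apply Hrc. lra.
  - intros z Hz. apply continuity_pt_filterlim, (Hc1 z); [lra|apply Hquiet; lra].
  - intros z Hz. destruct (Hquiet z ltac:(lra)) as [HnE1 HnE2].
    apply (Hflow z ltac:(lra) HnE1 HnE2).
Qed.

Lemma atanh_x2_after_act1 q t :
  E1 q -> q <= t -> (forall z, q < z < t -> ~ E1 z) -> (forall z, q < z <= t -> ~ E2 z) ->
  atanh (x2 t) = atanh (x2 q) + Mfun p (t - q).
Proof.
  intros Hq Hqt HnE1 HnE2.
  pose proof Hsol as (HE1pos & _ & _ & _ & _ & _ & Hflow & _ & Hc2 & Hrc & _).
  pose proof (HE1pos q Hq) as Hq0.
  assert (Hr : rr p <> 0) by (destruct Hp as (_ & _ & _ & _ & _ & Hr & _); lra).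
  assert (HMd : forall z, is_derive (fun u => Mfun p (u - q)) z
                                   (xrate p (al2 p) (exp (- rr p * (z - q))))).
  { intros z. rewrite <- (Rmult_1_l (xrate _ _ _)).
    apply (is_derive_comp (Mfun p) (fun u => u - q)); [apply is_derive_Mfun, Hr|].
    auto_derive; [exact I|ring]. }
  assert (HMc : forall z, continuity_pt (fun u => Mfun p (u - q)) z)
    by (intros z; apply continuity_pt_of_ex_derive; eexists; apply HMd).
  enough (atanh (x2 t) - Mfun p (t - q) = atanh (x2 q) - Mfun p (q - q)) as Heq
    by (rewrite Rminus_diag, Mfun_0 in Heq; lra).
  refine (eq_of_derive0 (fun u => atanh (x2 u) - Mfun p (u - q)) q t Hqt _ _ _).
  - apply (filterlim_Rminus (at_right q)).
    + apply filterlim_continuity_pt_comp; [apply Hrc; lra|].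
      apply continuity_pt_atanh, below_tau_open, x2_range; lra.
    + apply (filterlim_at_right_continuity_pt (fun u => Mfun p (u - q))), HMc.
  - intros z Hz. apply continuity_pt_minus; [|apply HMc].
    apply (continuity_pt_comp x2 atanh).
    + apply continuity_pt_filterlim, (Hc2 z); [lra|apply HnE2, Hz].
    + apply continuity_pt_atanh, below_tau_open, x2_range; lra.
  - intros z Hz.
    assert (Hquiet : forall w, q < w < t -> ~ E1 w /\ ~ E2 w)
      by (intros w Hw; split; [apply HnE1|apply HnE2]; lra).
    destruct (Hquiet z Hz) as [HnE1z HnE2z].
    destruct (Hflow z ltac:(lra) HnE1z HnE2z) as (_ & Hdx2 & _).
    replace 0 with (xrate p (al2 p) (y1 z) - xrate p (al2 p) (exp (- rr p * (z - q))))
      by (rewrite (y1_after_act1 q t Hq Hquiet z); lra).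
    apply (is_derive_minus (fun u => atanh (x2 u))); [|apply HMd].
    apply is_derive_atanh_comp; [apply below_tau_open, x2_range; lra|exact Hdx2].
Qed.

Hypothesis Hdrive2 : sA p * al2 p - sS p * muS p <= 0.
Hypothesis HM : Mc p > 0.

Lemma atanh_x2_grows m s0 :
  (forall z, E2 z -> z <= m) -> m < s0 -> E1 s0 ->
  forall t, E1 t -> s0 <= t -> atanh (x2 s0) + Mc p / Tc p * (t - s0) <= atanh (x2 t).
Proof.
  intros HE2 Hms0 Hs0.
  pose proof Hsol as (_ & _ & HE1fin & _).
  apply (locally_finite_ind E1 _ s0 HE1fin Hs0); [lra|].
  intros q t Hq Hqt Hgap IH.
  destruct (next_act1 q Hq) as (t' & Ht' & Ht'E).
  assert (Htt' : t <= t') by (apply Rnot_lt_le; intros Hlt; apply (Hgap t' Ht'E); lra).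
  rewrite (atanh_x2_after_act1 q t Hq); [|lra|intros z Hz HE; exact (Hgap z HE Hz)|].
  2: { intros z Hz HE. pose proof (HE2 z HE). lra. }
  assert (Hchord : Mc p / Tc p * (t - q) <= Mfun p (t - q)).
  { apply Mfun_ge_chord; [exact Hp| |exact Tc_pos|exact HM|lra].
    unfold Ac. destruct Hp as (_ & _ & HsC & _ & HmuC & _).
    assert (0 < sC p * muC p) by (apply Rmult_lt_0_compat; lra). nra. }
  lra.
Qed.

Lemma E2_unbounded m : exists t, m < t /\ E2 t.
Proof.
  apply NNPP. intros Hno.
  assert (HE2 : forall z, E2 z -> z <= m)
    by (intros z Hz; apply Rnot_lt_le; intros Hmz; apply Hno; eauto).
  pose proof Hsol as (HE1pos & _).
  destruct (E1_unbounded m) as (s0 & Hms0 & Hs0).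
  pose proof (HE1pos s0 Hs0) as Hs0pos.
  set (c := Mc p / Tc p).
  assert (Hc : 0 < c) by (apply Rdiv_lt_0_compat; [exact HM|exact Tc_pos]).
  assert (atanh (x2 s0) < atanh (tau p)) by (apply atanh_lt_tau, x2_range; lra).
  set (N := s0 + (atanh (tau p) - atanh (x2 s0)) / c).
  assert (HN : c * (N - s0) = atanh (tau p) - atanh (x2 s0)) by (unfold N; field; lra).
  assert (Hs0N : s0 < N) by (apply Rlt_0_minus; nra).
  destruct (E1_unbounded N) as (t & HNt & Ht).
  pose proof (atanh_x2_grows m s0 HE2 Hms0 Hs0 t Ht ltac:(lra)) as Hgrow.
  assert (atanh (x2 t) < atanh (tau p)) by (apply atanh_lt_tau, x2_range; lra).
  assert (c * (N - s0) < c * (t - s0)) by (apply Rmult_lt_compat_l; lra).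
  fold c in Hgrow. lra.
Qed.

End Solution.

Theorem theorem3 (p : params) (x1 x2 y1 y2 : R -> R) (E1 E2 : R -> Prop) :
  valid_params p ->
  (* (h1) *) sA p * al1 p - sS p * muS p > 0 ->
  (* (h2) *) sA p * al2 p - sS p * muS p <= 0 ->
  (* (h3) *) x1 0 = 0 -> y1 0 = 0 -> y2 0 = 0 -> -1 < x2 0 < tau p ->
  Mc p > 0 ->
  is_solution p x1 x2 y1 y2 E1 E2 ->
  forall tstart, 0 <= tstart ->
    ~ finite_set (fun t => E1 t /\ tstart < t) /\
    ~ finite_set (fun t => E2 t /\ tstart < t).
Proof.
  intros Hp Hdrive1 Hdrive2 _ _ _ _ HM Hsol tstart _.
  split; apply not_finite_of_unbounded.
  - exact (E1_unbounded p x1 x2 y1 y2 E1 E2 Hp Hsol Hdrive1).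
  - exact (E2_unbounded p x1 x2 y1 y2 E1 E2 Hp Hsol Hdrive1 Hdrive2 HM).
Qed.
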